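(* Let $T=((\Omega,\mathcal{A}),\{(\Omega,\mathcal{M}_i)\}_{i\in N},\{t_i\}_{i\in N})$ be a type space. The players' beliefs in $T$ are universally consistent if and only if for every finite $I\subseteq N$ and every $I$-common certainty component $S$, the players' beliefs in the induced type space $T_S$ (with player set $I$) are consistent.
   Context: A field on a set $X$ is a collection of subsets of $X$ containing $X$ and closed under complements and finite intersections. For a field $\mathcal{A}$ on $\Omega$, $\mathrm{pba}(\Omega,\mathcal{A})$ is the set of finitely additive nonnegative $P:\mathcal{A}\to\mathbb{R}$ with $P(\Omega)=1$; $B(\Omega,\mathcal{A})$ the sup-norm closure of the linear span of indicators of sets in $\mathcal{A}$; the space of bounded finitely additive set functions carries the weak* topology (weakest making $\mu\mapsto\int f\,d\mu$ continuous for all $f\in B(\Omega,\mathcal{A})$), $\overline{\,\cdot\,}^\ast$ denotes weak* closure. A type space is $((\Omega,\mathcal{A}),\{(\Omega,\mathcal{M}_i)\}_{i\in N},\{t_i\}_{i\in N})$ with $N$ a nonempty set of players, fields $\mathcal{M}_i\subseteq\mathcal{A}$ on a set $\Omega$, and $t_i:\Omega\times\mathcal{A}\to[0,1]$ with: $t_i(\omega,\cdot)\in\mathrm{pba}(\Omega,\mathcal{A})$; $t_i(\cdot,E)\in B(\Omega,\mathcal{M}_i)$ for all $E\in\mathcal{A}$; $t_i(\omega,E)=1$ whenever $E\in\mathcal{M}_i$, $\omega\in E$. For each player $i$, $\Pi_i=\overline{\mathrm{conv}\{t_i(\omega,\cdot):\omega\in\Omega\}}^\ast$ (equivalently the $P\in\mathrm{pba}(\Omega,\mathcal{A})$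 with $P(E\cap F)=\int_F t_i(\cdot,E)\,dP$ for all $E\in\mathcal{A},F\in\mathcal{M}_i$). The players' beliefs in a type space are consistent if $\bigcap_{i\in J}\Pi_i\ne\emptyset$ for every finite set $J$ of its players. For $I\subseteq N$, a nonempty $S\subseteq\Omega$ is an $I$-common certainty component if there is $E\in\mathcal{A}$ with $E\subseteq S$ and $t_i(\omega,E)=1$ for all $\omega\in S$, $i\in I$. The induced type space is $T_S=((S,\mathcal{A}^S),\{(S,\mathcal{M}_i^S)\}_{i\in I},\{t_i^S\}_{i\in I})$ with $\mathcal{A}^S=\{F\cap S:F\in\mathcal{A}\}$, $\mathcal{M}_i^S=\{F\cap S:F\in\mathcal{M}_i\}$, $t_i^S(\omega,F\cap S)=t_i(\omega,F)$ for $\omega\in S$, $F\in\mathcal{A}$. The players' beliefs in $T$ are universally consistent if for every finite $I\subseteq N$ and every $I$-common certainty component $S$ there exists $P\in\bigcap_{i\in I}\Pi_i$ with $\inf\{P(E):E\in\mathcal{A},S\subseteq E\}>0$. *)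

From HB Require Import structures.
From mathcomp Require Import all_boot all_order all_algebra.
From mathcomp Require Import all_classical all_reals.
From mathcomp Require Import numfun.
From Stdlib Require Import ClassicalEpsilon.
Set Implicit Arguments. Unset Strict Implicit. Unset Printing Implicit Defensive.
Import Order.TTheory GRing.Theory Num.Theory.
Local Open Scope classical_set_scope.
Local Open Scope ring_scope.

Section TypeSpaces.
Context {R : realType}.

Definition is_field {Omega : Type} (F : set (set Omega)) : Prop :=
  F setT /\ (forall E, F E -> F (~` E)) /\
  (forall E G, F E -> F G -> F (E `&` G)).

(* Set functions are total functions set Omega -> R; only their values on
   the field A matter. *)
Definition fin_additive {Omega : Type} (A : set (set Omega)) (mu : set Omega -> R) : Prop :=
  forall E G, A E -> A G -> E `&` G = set0 -> mu (E `|` G) = mu E + mu G.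

Definition bcharge {Omega : Type} (A : set (set Omega)) (mu : set Omega -> R) : Prop :=
  fin_additive A mu /\ exists M : R, forall E, A E -> `|mu E| <= M.

Definition pba {Omega : Type} (A : set (set Omega)) (P : set Omega -> R) : Prop :=
  fin_additive A P /\ (forall E, A E -> 0 <= P E) /\ P setT = 1.

Definition simple_fun {Omega : Type} (n : nat) (c : 'I_n -> R) (E : 'I_n -> set Omega)
  : Omega -> R := fun w => \sum_(k < n) c k * \1_(E k) w.

Definition inB {Omega : Type} (A : set (set Omega)) (f : Omega -> R) : Prop :=
  forall eps : R, 0 < eps -> exists n (c : 'I_n -> R) (E : 'I_n -> set Omega),
    (forall k, A (E k)) /\ forall w, `|f w - simple_fun c E w| < eps.

Definition integral_is {Omega : Type} (A : set (set Omega)) (mu : set Omega -> R)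
  (f : Omega -> R) (L : R) : Prop :=
  forall eps : R, 0 < eps -> exists2 d : R, 0 < d &
    forall n (c : 'I_n -> R) (E : 'I_n -> set Omega), (forall k, A (E k)) ->
      (forall w, `|f w - simple_fun c E w| < d) ->
      `|\sum_(k < n) c k * mu (E k) - L| < eps.

Definition integral {Omega : Type} (A : set (set Omega)) (mu : set Omega -> R)
  (f : Omega -> R) : R :=
  epsilon (inhabits 0) (integral_is A mu f).

Definition wstar_closure {Omega : Type} (A : set (set Omega))
  (C : set (set Omega -> R)) : set (set Omega -> R) :=
  fun mu => bcharge A mu /\
    forall n (f : 'I_n -> Omega -> R), (forall k, inB A (f k)) ->
    forall eps : R, 0 < eps -> exists Q, C Q /\
      forall k, `|integral A Q (f k) - integral A mu (f k)| < eps.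

Definition conv_types {Omega N : Type} (t : N -> Omega -> set Omega -> R) (i : N)
  : set (set Omega -> R) :=
  fun Q => exists n (lam : 'I_n -> R) (ws : 'I_n -> Omega),
    (forall k, 0 <= lam k) /\ \sum_(k < n) lam k = 1 /\
    Q = (fun E => \sum_(k < n) lam k * t i (ws k) E).

Definition Pi {Omega N : Type} (A : set (set Omega)) (t : N -> Omega -> set Omega -> R)
  (i : N) : set (set Omega -> R) :=
  wstar_closure A (conv_types t i).

(* Type space with player set N (all of the type N), which is nonempty. *)
Definition type_space {Omega N : Type} (A : set (set Omega)) (M : N -> set (set Omega))
  (t : N -> Omega -> set Omega -> R) : Prop :=
  (exists i : N, True) /\ is_field A /\
  forall i : N,
    is_field (M i) /\ M i `<=` A /\
    (forall w, pba A (t i w)) /\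
    (forall E, A E -> inB (M i) (fun w => t i w E)) /\
    (forall E w, M i E -> E w -> t i w E = 1).

Definition consistent {Omega N : Type} (A : set (set Omega))
  (t : N -> Omega -> set Omega -> R) : Prop :=
  forall J : set N, finite_set J ->
    exists P, bcharge A P /\ forall i, J i -> Pi A t i P.

Definition cc_component {Omega N : Type} (A : set (set Omega))
  (t : N -> Omega -> set Omega -> R) (I : set N) (S : set Omega) : Prop :=
  S !=set0 /\ exists E, A E /\ E `<=` S /\
    forall w i, S w -> I i -> t i w E = 1.

Definition univ_consistent {Omega N : Type} (A : set (set Omega))
  (t : N -> Omega -> set Omega -> R) : Prop :=
  forall I : set N, finite_set I -> forall S, cc_component A t I S ->
    exists P, bcharge A P /\ (forall i, I i -> Pi A t i P) /\
      exists2 d : R, 0 < d & forall E, A E -> S `<=` E -> d <= P E.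

(* Induced type space T_S: carrier S (as a subtype), field A^S = {F cap S},
   players I (as a subtype), t_i^S(w, F cap S) = t_i(w, F). *)
Definition restr_fam {Omega : Type} (S : set Omega) (X : set (set Omega))
  : set (set {w : Omega | S w}) :=
  [set G | exists2 F, X F & G = (@proj1_sig Omega S) @^-1` F].
Arguments restr_fam {Omega} S X.

Definition restr_sf {Omega : Type} (A : set (set Omega)) (S : set Omega)
  (mu : set Omega -> R) : set {w : Omega | S w} -> R :=
  fun G => mu (epsilon (inhabits setT)
                 (fun F => A F /\ G = (@proj1_sig Omega S) @^-1` F)).
Arguments restr_sf {Omega} A S mu.

Definition induced_M {Omega N : Type} (S : set Omega) (I : set N)
  (M : N -> set (set Omega)) : {i : N | I i} -> set (set {w : Omega | S w}) :=
  fun j => restr_fam S (M (proj1_sig j)).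

Definition induced_t {Omega N : Type} (A : set (set Omega)) (S : set Omega) (I : set N)
  (t : N -> Omega -> set Omega -> R)
  : {i : N | I i} -> {w : Omega | S w} -> set {w : Omega | S w} -> R :=
  fun j w => restr_sf A S (t (proj1_sig j) (proj1_sig w)).

End TypeSpaces.
Arguments induced_M {Omega N} S I M.
Arguments restr_fam {Omega} S X.
Arguments restr_sf {R Omega} A S mu.
Arguments induced_t {R Omega N} A S I t.

From mathcomp Require Import all_boot all_order all_algebra.
From mathcomp Require Import all_classical all_reals numfun.
From mathcomp Require Import ring lra.
From Stdlib Require Import ClassicalEpsilon.
Set Implicit Arguments. Unset Strict Implicit. Unset Printing Implicit Defensive.
Import Order.TTheory GRing.Theory Num.Theory.
Local Open Scope classical_set_scope.
Local Open Scope ring_scope.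

(* Integrals of functions of B(Omega, A) against bounded finitely additive set
   functions are controlled by simple approximations: if |f - s| <= r for a
   simple s = sum_k c_k 1_(E_k), then |int f dmu - sum_k c_k mu(E_k)| <= 2 |mu| r,
   which follows by refining s into atoms.

   (=>) Let P lie in every Pi_i, i in I, with P(F) >= d for all F containing S,
   and let E, included in S, be the common-certainty event. Each t_i(w, .)
   gives mass 1 to every M_i-set containing w, and t_i(., E) is uniformly
   approximated by M_i-simple functions; hence t_i(w, E) is 0 or 1, the set
   B_i = {t_i(., E) = 1} contains S and lies in M_i, and P(E) = P(B_i) >= d.
   The conditional P(. cap E) / P(E), traced on S, lies in every induced Pi_i:
   approximate P by a mixture sum_m lam_m t_i(w_m, .), drop the w_m with
   t_i(w_m, E) = 0, replace the others by points of E with nearly the same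
   expectations, and renormalise.

   (<=) A common prior of T_S, pushed forward along the inclusion of S, lies in
   every Pi_i, because induced types push forward to types; it gives mass 1 to
   every event containing S. When I is empty, a point mass in S will do. *)

Section Field.
Context {Omega : Type} (A : set (set Omega)).
Hypothesis HA : is_field A.

Lemma field_setT : A setT. Proof. by case: HA. Qed.
Lemma field_setC X : A X -> A (~` X). Proof. by case: HA => _ [+ _]; apply. Qed.
Lemma field_setI X Y : A X -> A Y -> A (X `&` Y). Proof. by case: HA => _ [_]; apply. Qed.
Lemma field_set0 : A set0. Proof. by rewrite -setCT; exact/field_setC/field_setT. Qed.

Lemma field_setU X Y : A X -> A Y -> A (X `|` Y).
Proof.
move=> hX hY; rewrite -(setCK (X `|` Y)) setCU.
by apply/field_setC/field_setI; apply: field_setC.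
Qed.

Lemma field_setD X Y : A X -> A Y -> A (X `\` Y).
Proof. by move=> hX hY; rewrite setDE; apply: field_setI => //; apply: field_setC. Qed.

Lemma field_bigcap n (X : 'I_n -> set Omega) :
  (forall k, A (X k)) -> A [set w | forall k, X k w].
Proof.
elim: n X => [|n IH] X hX.
  have -> : [set w | forall k : 'I_0, X k w] = setT by apply/seteqP; split => // w _ [].
  exact: field_setT.
have -> : [set w | forall k, X k w] =
    X ord0 `&` [set w | forall k : 'I_n, X (lift ord0 k) w].
  apply/seteqP; split => [w h|w [h0 h] k]; first by split => // k; apply: h.
  by case: (unliftP ord0 k) => [j ->|->].
by apply: field_setI => //; apply: IH.
Qed.

End Field.

Section SimpleFunctions.
Context {R : realType} {Omega : Type}.
Implicit Types (A : set (set Omega)) (l : seq (R * set Omega)) (mu : set Omega -> R).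

Definition sfun l (w : Omega) : R := \sum_(p <- l) p.1 * \1_(p.2) w.
Definition sint mu l : R := \sum_(p <- l) p.1 * mu p.2.
Definition simple_over A l := forall p, p \in l -> A p.2.

Lemma sfun_nil w : sfun [::] w = 0. Proof. by rewrite /sfun big_nil. Qed.
Lemma sfun_cons p l w : sfun (p :: l) w = p.1 * \1_(p.2) w + sfun l w.
Proof. by rewrite /sfun big_cons. Qed.
Lemma sint_cons mu p l : sint mu (p :: l) = p.1 * mu p.2 + sint mu l.
Proof. by rewrite /sint big_cons. Qed.
Lemma sfun_cat l1 l2 w : sfun (l1 ++ l2) w = sfun l1 w + sfun l2 w.
Proof. by rewrite /sfun big_cat. Qed.
Lemma sint_cat mu l1 l2 : sint mu (l1 ++ l2) = sint mu l1 + sint mu l2.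
Proof. by rewrite /sint big_cat. Qed.

Lemma simple_over_cons A p l : simple_over A (p :: l) <-> A p.2 /\ simple_over A l.
Proof.
split=> [h|[hp hl] q]; first by split=> [|q ql]; apply: h; rewrite inE ?eqxx ?ql ?orbT.
by rewrite inE => /predU1P [->|/hl].
Qed.

Lemma simple_over_cat A l1 l2 :
  simple_over A l1 -> simple_over A l2 -> simple_over A (l1 ++ l2).
Proof. by move=> h1 h2 p; rewrite mem_cat => /orP [/h1|/h2]. Qed.

Lemma simple_over_map A (g : R -> R) l :
  simple_over A l -> simple_over A [seq (g p.1, p.2) | p <- l].
Proof. by move=> hl _ /mapP [p /hl hp ->]. Qed.

Definition lopp l := [seq (- p.1, p.2) | p <- l].

Lemma sfun_lopp l w : sfun (lopp l) w = - sfun l w.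
Proof. by rewrite /sfun big_map -sumrN; apply: eq_bigr => p _; rewrite mulNr. Qed.
Lemma sint_lopp mu l : sint mu (lopp l) = - sint mu l.
Proof. by rewrite /sint big_map -sumrN; apply: eq_bigr => p _; rewrite mulNr. Qed.

Lemma sfun_scale c l w : sfun [seq (c * p.1, p.2) | p <- l] w = c * sfun l w.
Proof. by rewrite /sfun big_map mulr_sumr; apply: eq_bigr => p _; rewrite mulrA. Qed.

Definition seq_of_simple n (c : 'I_n -> R) (E : 'I_n -> set Omega) :=
  [seq (c k, E k) | k <- enum 'I_n].

Lemma sfun_seq_of_simple n (c : 'I_n -> R) E w :
  sfun (seq_of_simple c E) w = simple_fun c E w.
Proof. by rewrite /sfun big_map big_enum. Qed.

Lemma sint_seq_of_simple mu n (c : 'I_n -> R) E :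
  sint mu (seq_of_simple c E) = \sum_(k < n) c k * mu (E k).
Proof. by rewrite /sint big_map big_enum. Qed.

Lemma simple_over_seq_of_simple A n (c : 'I_n -> R) E :
  (forall k, A (E k)) -> simple_over A (seq_of_simple c E).
Proof. by move=> hE p; rewrite /seq_of_simple => /mapP [k _ ->]; apply: hE. Qed.

Lemma inB_sfunP A (f : Omega -> R) : inB A f <->
  forall e, 0 < e -> exists2 l, simple_over A l & forall w, `|f w - sfun l w| < e.
Proof.
split=> [hf e /hf [n [c [E [hE hs]]]]|h e /h [l hl hs]].
  exists (seq_of_simple c E); first exact: simple_over_seq_of_simple.
  by move=> w; rewrite sfun_seq_of_simple.
pose p k := nth (0, setT) l k.
exists (size l), (fun k : 'I_(size l) => (p k).1), (fun k : 'I_(size l) => (p k).2).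
split=> [k|w]; first exact/hl/mem_nth.
rewrite /simple_fun -(big_mkord xpredT (fun k => (p k).1 * \1_(p k).2 w)).
by rewrite -(big_nth _ xpredT (fun q => q.1 * \1_q.2 w)).
Qed.

Definition approximates A f l r :=
  [/\ simple_over A l, 0 <= r & forall w, `|f w - sfun l w| <= r].

Lemma approximates_exists A f r : inB A f -> 0 < r -> exists l, approximates A f l r.
Proof.
move=> /inB_sfunP hf /[dup] hr /hf [l hl hs].
by exists l; split=> // [|w]; [exact: ltW | exact/ltW/hs].
Qed.

End SimpleFunctions.

Section FinitelyAdditive.
Context {R : realType} {Omega : Type} (A : set (set Omega)).
Hypothesis HA : is_field A.
Variable mu : set Omega -> R.
Hypothesis mu_add : fin_additive A mu.

Lemma fin_additive_set0 : mu set0 = 0.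
Proof.
have := mu_add (field_set0 HA) (field_set0 HA) (setI0 _); rewrite setU0 => h.
by apply: (addrI (mu set0)); rewrite addr0 -h.
Qed.

Lemma fin_additive_split X Y : A X -> A Y -> mu X = mu (X `&` Y) + mu (X `\` Y).
Proof.
move=> hX hY; rewrite -mu_add ?setDE -?setIUr ?setUCr ?setIT //.
- exact: field_setI.
- by rewrite -setDE; apply: field_setD.
by rewrite setIACA setICr !setI0.
Qed.

(* The partition of [F] generated by the sets of [l]; each cell carries the
   value of [sfun l] on it. *)
Fixpoint atoms (l : seq (R * set Omega)) (F : set Omega) : seq (R * set Omega) :=
  if l is p :: l' then
    [seq (p.1 + x.1, x.2) | x <- atoms l' (F `&` p.2)] ++ atoms l' (F `\` p.2)
  else [:: (0, F)].

Lemma atomsP l F x : A F -> simple_over A l -> x \in atoms l F ->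
  [/\ A x.2, x.2 `<=` F & forall w, x.2 w -> sfun l w = x.1].
Proof.
elim: l F x => [|p l IH] F x hF /=.
  by move=> _; rewrite inE => /eqP -> /=; split=> // w _; rewrite sfun_nil.
move=> /simple_over_cons [hp hl]; rewrite mem_cat => /orP [/mapP [y hy ->]|hx] /=.
  have [h1 h2 h3] := IH _ _ (field_setI HA hF hp) hl hy.
  split=> // [w /h2 []//|w yw]; rewrite sfun_cons h3 //.
  by rewrite indicE mem_set ?mulr1 //; case: (h2 _ yw).
have [h1 h2 h3] := IH _ _ (field_setD HA hF hp) hl hx.
split=> // [w /h2 []//|w xw]; rewrite sfun_cons h3 //.
by rewrite indicE memNset ?mulr0 ?add0r //; case: (h2 _ xw).
Qed.

Lemma sum_atoms l F : A F -> simple_over A l -> \sum_(x <- atoms l F) mu x.2 = mu F.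
Proof.
elim: l F => [|p l IH] F hF /=; first by rewrite big_seq1.
move=> /simple_over_cons [hp hl]; rewrite big_cat big_map /= !IH //.
- by rewrite -fin_additive_split.
- exact: field_setD.
- exact: field_setI.
Qed.

Lemma sum_atoms_sel (q : pred (set Omega)) l F : A F -> simple_over A l ->
  exists U, [/\ A U, U `<=` F & \sum_(x <- atoms l F | q x.2) mu x.2 = mu U].
Proof.
elim: l F => [|p l IH] F hF /=.
  move=> _; rewrite big_cons big_nil /=; case: (q F).
    by exists F; rewrite addr0; split.
  by exists set0; rewrite fin_additive_set0; split=> //; exact: field_set0.
move=> /simple_over_cons [hp hl]; rewrite big_cat big_map /=.
have [U1 [hU1 sU1 ->]] := IH _ (field_setI HA hF hp) hl.
have [U2 [hU2 sU2 ->]] := IH _ (field_setD HA hF hp) hl.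
exists (U1 `|` U2); split; first exact: field_setU.
  by move=> w [/sU1 []|/sU2 []].
by rewrite mu_add //; apply/seteqP; split=> // w [/sU1 [_ a] /sU2 [_ /(_ a)]].
Qed.

Lemma sint_atoms l F : A F -> simple_over A l ->
  \sum_(p <- l) p.1 * mu (p.2 `&` F) = \sum_(x <- atoms l F) x.1 * mu x.2.
Proof.
elim: l F => [|p l IH] F hF /=; first by rewrite big_nil big_seq1 mul0r.
move=> /simple_over_cons [hp hl]; rewrite big_cons big_cat big_map /=.
have hFp := field_setI HA hF hp; have hFnp := field_setD HA hF hp.
have -> : \sum_(j <- l) j.1 * mu (j.2 `&` F) =
    \sum_(j <- l) j.1 * mu (j.2 `&` (F `&` p.2)) +
    \sum_(j <- l) j.1 * mu (j.2 `&` (F `\` p.2)).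
  rewrite -big_split big_seq [RHS]big_seq /=; apply: eq_bigr => j /hl hj.
  by rewrite -mulrDr setDE !setIA -setDE -fin_additive_split //; apply: field_setI.
rewrite IH // IH //.
under [X in _ = X + _]eq_bigr => x _ do rewrite mulrDl.
by rewrite big_split /= -mulr_sumr sum_atoms // (setIC F) addrA.
Qed.

Lemma sum_norm_atoms_le (M : R) l : (forall X, A X -> `|mu X| <= M) ->
  simple_over A l -> \sum_(x <- atoms l setT) `|mu x.2| <= 2 * M.
Proof.
move=> hM hl; rewrite (bigID (fun x => 0 <= mu x.2)) /=.
have [U1 [hU1 _ e1]] := sum_atoms_sel (fun X => 0 <= mu X) (field_setT HA) hl.
have [U2 [hU2 _ e2]] := sum_atoms_sel (fun X => ~~ (0 <= mu X)) (field_setT HA) hl.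
have -> : \sum_(x <- atoms l setT | 0 <= mu x.2) `|mu x.2| = mu U1.
  by rewrite -e1; apply: eq_bigr => x /ger0_norm.
have -> : \sum_(x <- atoms l setT | ~~ (0 <= mu x.2)) `|mu x.2| = - mu U2.
  by rewrite -e2 -sumrN; apply: eq_bigr => x; rewrite -ltNge => /ltW /ler0_norm.
have := hM _ hU1; have := hM _ hU2; rewrite !ler_norml => /andP [? ?] /andP [? ?].
lra.
Qed.

Lemma norm_sint_le (M r : R) l : (forall X, A X -> `|mu X| <= M) ->
  simple_over A l -> 0 <= r -> (forall w, `|sfun l w| <= r) ->
  `|sint mu l| <= 2 * M * r.
Proof.
move=> hM hl hr hs.
have -> : sint mu l = \sum_(x <- atoms l setT) x.1 * mu x.2.
  rewrite /sint -sint_atoms //; last exact: field_setT.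
  by under [RHS]eq_bigr do rewrite setIT.
apply: le_trans (ler_norm_sum _ _ _) _.
apply: (@le_trans _ _ (\sum_(x <- atoms l setT) r * `|mu x.2|)).
  rewrite big_seq [X in _ <= X]big_seq; apply: ler_sum => x.
  move=> /(atomsP (field_setT HA) hl) [_ _ hv]; rewrite normrM.
  have [->|/set0P [w xw]] := eqVneq x.2 set0.
    by rewrite fin_additive_set0 normr0 !mulr0.
  by rewrite -(hv _ xw); apply: ler_wpM2r.
by rewrite -mulr_sumr mulrC ler_wpM2r // sum_norm_atoms_le.
Qed.

End FinitelyAdditive.

Lemma field_sfun_preimage {R : realType} {Omega : Type} (A : set (set Omega))
    (l : seq (R * set Omega)) (p : R -> Prop) :
  is_field A -> simple_over A l -> A [set w | p (sfun l w)].
Proof.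
move=> HA; rewrite -[X in A X]setTI; move: (field_setT HA).
elim: l p setT => [|q l IH] p F hF.
  move=> _; have [hp|hp] := pselect (p 0).
    have -> : F `&` [set w | p (sfun [::] w)] = F by apply/setIidl => w _; rewrite /= sfun_nil.
    exact: hF.
  have -> : F `&` [set w | p (sfun [::] w)] = set0.
    by apply/seteqP; split=> // w [_]; rewrite /= sfun_nil.
  exact: field_set0.
move=> /simple_over_cons [hq hl].
have -> : F `&` [set w | p (sfun (q :: l) w)] =
    (F `&` q.2) `&` [set w | p (q.1 + sfun l w)] `|`
    (F `\` q.2) `&` [set w | p (sfun l w)].
  apply/seteqP; split=> w; rewrite /= sfun_cons indicE.
    move=> [hw]; have [h|h] := pselect (q.2 w).
      by rewrite mem_set // mulr1 => hp; left.
    by rewrite memNset // mulr0 add0r => hp; right.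
  case=> [[[hw h] hp]|[[hw h] hp]]; split=> //; first by rewrite mem_set // mulr1.
  by rewrite memNset // mulr0 add0r.
apply: (field_setU HA).
  by apply: (IH (fun x => p (q.1 + x))) => //; apply: field_setI.
by apply: IH => //; apply: field_setD.
Qed.

Lemma eq0_of_norm_le_mul {R : realType} (x C : R) : 0 <= C ->
  (forall e, 0 < e -> `|x| <= C * e) -> x = 0.
Proof.
move=> hC h; apply/eqP; rewrite -normr_le0; apply/ler_addgt0Pr => e he.
rewrite add0r; apply: le_trans (h (e / (C + 1)) _) _; first by apply: divr_gt0; lra.
by rewrite mulrA ler_pdivrMr; nra.
Qed.

Section Integral.
Context {R : realType} {Omega : Type} (A : set (set Omega)).
Hypothesis HA : is_field A.
Variables (mu : set Omega -> R) (M : R).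
Hypothesis mu_add : fin_additive A mu.
Hypothesis mu_bound : forall X, A X -> `|mu X| <= M.
Variable f : Omega -> R.
Hypothesis hf : inB A f.

Lemma bound_ge0 : 0 <= M.
Proof. exact: le_trans (normr_ge0 _) (mu_bound (field_setT HA)). Qed.

Lemma approximates_sint_dist l r l' r' :
  approximates A f l r -> approximates A f l' r' ->
  `|sint mu l - sint mu l'| <= 2 * M * (r + r').
Proof.
move=> [hl hr hs] [hl' hr' hs'].
rewrite -sint_lopp -sint_cat; apply: (norm_sint_le HA mu_add mu_bound).
- by apply: simple_over_cat => //; apply: simple_over_map.
- lra.
move=> w; rewrite sfun_cat sfun_lopp.
have := hs w; have := hs' w; rewrite !ler_norml => /andP [? ?] /andP [? ?].
apply/andP; split; lra.
Qed.

Let lower_estimates :=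
  [set y : R | exists l r, approximates A f l r /\ y = sint mu l - 2 * M * r].

Lemma sup_lower_estimates l r : approximates A f l r ->
  sint mu l - 2 * M * r <= sup lower_estimates <= sint mu l + 2 * M * r.
Proof.
move=> ha.
have ub : ubound lower_estimates (sint mu l + 2 * M * r).
  move=> y [l' [r' [ha' ->]]].
  by have := approximates_sint_dist ha' ha; rewrite ler_norml => /andP [? ?]; lra.
have ne : lower_estimates !=set0.
  have [l1 h1] := approximates_exists hf ltr01.
  by exists (sint mu l1 - 2 * M * 1), l1, 1.
apply/andP; split; last exact: ge_sup.
by apply: sup_upper_bound; [split=> //; exists (sint mu l + 2 * M * r) | exists l, r].
Qed.

Lemma integral_is_sup : integral_is A mu f (sup lower_estimates).
Proof.
move=> eps he; have hM := bound_ge0.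
have hd : 0 < eps / (2 * M + 1) by apply: divr_gt0 => //; lra.
exists (eps / (2 * M + 1)) => // n c E hE hs.
have ha : approximates A f (seq_of_simple c E) (eps / (2 * M + 1)).
  split=> [||w]; [exact: simple_over_seq_of_simple | exact: ltW |].
  by rewrite sfun_seq_of_simple; apply/ltW.
have := sup_lower_estimates ha; rewrite sint_seq_of_simple => /andP [? ?].
have : 2 * M * (eps / (2 * M + 1)) < eps by rewrite mulrA ltr_pdivrMr; nra.
by move=> ?; rewrite ltr_norml; apply/andP; split; lra.
Qed.

Lemma integral_is_approx L l r : integral_is A mu f L -> approximates A f l r ->
  `|sint mu l - L| <= 2 * M * r.
Proof.
move=> hL ha; apply/ler_addgt0Pr => e he; have hM := bound_ge0.
have [d hd hdL] := hL (e / 2) (divr_gt0 he (ltr0Sn R 1)).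
have hK : 0 < e / (4 * M + 1) by apply: divr_gt0 => //; lra.
pose de := Num.min d (e / (4 * M + 1)).
have hde : 0 < de by rewrite lt_min hd hK.
have [n [c [E [hE hs]]]] := hf hde.
have hdeK : de * (4 * M + 1) <= e by rewrite -ler_pdivlMr ?ge_min ?lexx ?orbT //; lra.
have ded : de <= d by rewrite ge_min lexx.
have := hdL n c E hE (fun w => lt_le_trans (hs w) ded).
have ha' : approximates A f (seq_of_simple c E) de.
  split=> [||w]; [exact: simple_over_seq_of_simple | exact: ltW |].
  by rewrite sfun_seq_of_simple; apply/ltW.
have := approximates_sint_dist ha ha'; rewrite sint_seq_of_simple.
rewrite ler_norml ltr_norml => /andP [? ?] /andP [? ?].
by rewrite ler_norml; apply/andP; split; nra.
Qed.

Lemma integral_approx l r : approximates A f l r ->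
  `|sint mu l - integral A mu f| <= 2 * M * r.
Proof.
apply: integral_is_approx; apply: epsilon_spec.
by exists (sup lower_estimates); exact: integral_is_sup.
Qed.

End Integral.

Lemma integral_eq_scale {R : realType} {Omega Omega' : Type}
    (A : set (set Omega)) (A' : set (set Omega')) (HA : is_field A) (HA' : is_field A')
    (mu : set Omega -> R) (mu' : set Omega' -> R) (M M' : R)
    (f : Omega -> R) (f' : Omega' -> R) (a : R) :
  fin_additive A mu -> (forall X, A X -> `|mu X| <= M) ->
  fin_additive A' mu' -> (forall X, A' X -> `|mu' X| <= M') ->
  inB A f -> inB A' f' ->
  (forall r, 0 < r -> exists l l', [/\ approximates A f l r, approximates A' f' l' r &
      sint mu' l' = a * sint mu l]) ->
  integral A' mu' f' = a * integral A mu f.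
Proof.
move=> hadd hb hadd' hb' hf hf' h; apply/eqP; rewrite -subr_eq0; apply/eqP.
have hM := bound_ge0 HA hb; have hM' := bound_ge0 HA' hb'.
apply: (eq0_of_norm_le_mul (C := 2 * M' + `|a| * (2 * M))) => [|e he].
  by apply: addr_ge0; [lra | apply: mulr_ge0 => //; lra].
have [l [l' [hl hl' ee]]] := h e he.
have i1 := integral_approx HA hadd hb hf hl.
have i2 := integral_approx HA' hadd' hb' hf' hl'.
have -> : integral A' mu' f' - a * integral A mu f =
    - (sint mu' l' - integral A' mu' f') + a * (sint mu l - integral A mu f).
  by rewrite ee; ring.
apply: le_trans (ler_normD _ _) _; rewrite normrN normrM mulrDl.
by apply: lerD => //; rewrite -mulrA; apply: ler_wpM2l.
Qed.

Section BFunctions.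
Context {R : realType} {Omega : Type} (A : set (set Omega)).

Lemma inB_sfun (l : seq (R * set Omega)) : simple_over A l -> inB A (sfun l).
Proof. by move=> hl; apply/inB_sfunP => e he; exists l => // w; rewrite subrr normr0. Qed.

Lemma inB_indic F : A F -> inB A (\1_F : Omega -> R).
Proof.
move=> hF; have -> : (\1_F : Omega -> R) = sfun [:: (1, F)].
  by apply: funext => w; rewrite sfun_cons sfun_nil mul1r addr0.
by apply: inB_sfun => p; rewrite inE => /eqP ->.
Qed.

Lemma inB_uniform_limit (f : Omega -> R) :
  (forall e, 0 < e -> exists2 g, inB A g & forall w, `|f w - g w| <= e) -> inB A f.
Proof.
move=> h; apply/inB_sfunP => e he.
have he2 : 0 < e / 2 by apply: divr_gt0.
have [g /inB_sfunP hg hfg] := h _ he2; have [l hl hs] := hg _ he2.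
exists l => // w; have := hfg w; have := hs w.
rewrite ltr_norml ler_norml => /andP [? ?] /andP [? ?].
by rewrite ltr_norml; apply/andP; split; lra.
Qed.

Lemma inB_add (f g : Omega -> R) : inB A f -> inB A g -> inB A (fun w => f w + g w).
Proof.
move=> /inB_sfunP hf /inB_sfunP hg; apply/inB_sfunP => e he.
have he2 : 0 < e / 2 by apply: divr_gt0.
have [l1 hl1 hs1] := hf _ he2; have [l2 hl2 hs2] := hg _ he2.
exists (l1 ++ l2); first exact: simple_over_cat.
move=> w; rewrite sfun_cat; have := hs1 w; have := hs2 w.
by rewrite !ltr_norml => /andP [? ?] /andP [? ?]; apply/andP; split; lra.
Qed.

Lemma inB_scale (c : R) (f : Omega -> R) : inB A f -> inB A (fun w => c * f w).
Proof.
move=> /inB_sfunP hf; apply/inB_sfunP => e he.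
have hc : 0 < `|c| + 1 by have := normr_ge0 c; lra.
have [l hl hs] := hf _ (divr_gt0 he hc).
exists [seq (c * p.1, p.2) | p <- l]; first exact: simple_over_map.
move=> w; rewrite sfun_scale -mulrBr normrM.
apply: (@le_lt_trans _ _ ((`|c| + 1) * `|f w - sfun l w|)).
  by rewrite ler_wpM2r // lerDl.
by rewrite mulrC -ltr_pdivlMr.
Qed.

Lemma inB_sum {T : eqType} (s : seq T) (F : T -> Omega -> R) :
  (forall x, x \in s -> inB A (F x)) -> inB A (fun w => \sum_(x <- s) F x w).
Proof.
elim: s => [|x s IH] hs.
  have -> : (fun w => \sum_(x <- [::]) F x w) = sfun [::].
    by apply: funext => w; rewrite big_nil sfun_nil.
  exact: inB_sfun.
under eq_fun => w do rewrite big_cons.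
apply: inB_add; first by apply: hs; rewrite mem_head.
by apply: IH => y ys; apply: hs; rewrite in_cons ys orbT.
Qed.

End BFunctions.

Section Mixtures.
Context {R : realType} {Omega : Type} (A : set (set Omega)).

Lemma fin_additive_sum n (lam : 'I_n -> R) (mu : 'I_n -> set Omega -> R) :
  (forall k, fin_additive A (mu k)) -> fin_additive A (fun E => \sum_k lam k * mu k E).
Proof.
move=> h E G hE hG hEG; rewrite -big_split /=; apply: eq_bigr => k _.
by rewrite (h k) // mulrDr.
Qed.

Lemma norm_sum_le n (lam : 'I_n -> R) (mu : 'I_n -> set Omega -> R) (M : R) :
  (forall k X, A X -> `|mu k X| <= M) ->
  forall X, A X -> `|\sum_k lam k * mu k X| <= (\sum_k `|lam k|) * M.
Proof.
move=> h X hX; apply: le_trans (ler_norm_sum _ _ _) _.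
rewrite mulr_suml; apply: ler_sum => k _; rewrite normrM.
by apply: ler_wpM2l => //; apply: h.
Qed.

Lemma sint_sum n (lam : 'I_n -> R) (mu : 'I_n -> set Omega -> R) l :
  sint (fun E => \sum_k lam k * mu k E) l = \sum_k lam k * sint (mu k) l.
Proof.
rewrite /sint; under eq_bigr => p _ do rewrite mulr_sumr.
rewrite exchange_big /=; apply: eq_bigr => k _; rewrite mulr_sumr.
by apply: eq_bigr => p _; rewrite !mulrA (mulrC p.1).
Qed.

Hypothesis HA : is_field A.

Lemma integral_indic (mu : set Omega -> R) M F : fin_additive A mu ->
  (forall X, A X -> `|mu X| <= M) -> A F -> integral A mu \1_F = mu F.
Proof.
move=> hadd hM hF.
have ha : approximates A (\1_F : Omega -> R) [:: (1, F)] 0.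
  split=> // [p|w]; first by rewrite inE => /eqP ->.
  by rewrite sfun_cons sfun_nil mul1r addr0 subrr normr0.
have := integral_approx HA hadd hM (inB_indic hF) ha.
by rewrite sint_cons /sint big_nil mul1r addr0 mulr0 normr_le0 subr_eq0 => /eqP.
Qed.

Lemma integral_sum n (lam : 'I_n -> R) (mu : 'I_n -> set Omega -> R) (M : R) (f : Omega -> R) :
  (forall k, fin_additive A (mu k)) -> (forall k X, A X -> `|mu k X| <= M) ->
  inB A f ->
  integral A (fun E => \sum_k lam k * mu k E) f = \sum_k lam k * integral A (mu k) f.
Proof.
move=> hadd hb hf; apply/eqP; rewrite -subr_eq0; apply/eqP.
set L := \sum_k `|lam k|.
have hL : 0 <= L by apply: sumr_ge0.
have {}hb k X : A X -> `|mu k X| <= `|M|.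
  by move=> hX; apply: le_trans (hb k X hX) (ler_norm M).
apply: (eq0_of_norm_le_mul (C := 4 * L * `|M|)) => [|e he]; first by rewrite !mulr_ge0.
have [l hl] := approximates_exists hf he.
have h1 := integral_approx HA (fin_additive_sum lam hadd) (norm_sum_le lam hb) hf hl.
have h2 k := integral_approx HA (hadd k) (hb k) hf hl.
rewrite sint_sum -/L in h1.
have h3 : `|\sum_k lam k * sint (mu k) l - \sum_k lam k * integral A (mu k) f|
    <= L * (2 * `|M| * e).
  rewrite -sumrB; apply: le_trans (ler_norm_sum _ _ _) _; rewrite mulr_suml.
  by apply: ler_sum => k _; rewrite -mulrBr normrM; apply: ler_wpM2l.
have -> : 4 * L * `|M| * e = 2 * (L * `|M|) * e + L * (2 * `|M| * e) by ring.
set I := integral _ _ f; set J := \sum_k _ * integral _ _ f.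
set S := \sum_k lam k * sint (mu k) l.
have -> : I - J = - (S - I) + (S - J) by ring.
by apply: le_trans (ler_normD _ _) _; rewrite normrN lerD.
Qed.

End Mixtures.

Section ProbabilityCharge.
Context {R : realType} {Omega : Type} (A : set (set Omega)).
Hypothesis HA : is_field A.
Variable P : set Omega -> R.
Hypothesis HP : pba A P.

Lemma pba_fin_additive : fin_additive A P. Proof. by case: HP. Qed.
Lemma pba_ge0 X : A X -> 0 <= P X. Proof. by case: HP => _ [+ _]; apply. Qed.
Lemma pba_setT : P setT = 1. Proof. by case: HP => _ []. Qed.

Lemma pba_setC X : A X -> P (~` X) = 1 - P X.
Proof.
move=> hX; have := pba_fin_additive hX (field_setC HA hX) (setICr X).
by rewrite setUCr pba_setT => ->; rewrite addrC addKr.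
Qed.

Lemma pba_le X Y : A X -> A Y -> X `<=` Y -> P X <= P Y.
Proof.
move=> hX hY sXY; rewrite (fin_additive_split HA pba_fin_additive hY hX).
by rewrite (setIidr sXY) lerDl pba_ge0 //; apply: field_setD.
Qed.

Lemma pba_norm_le1 X : A X -> `|P X| <= 1.
Proof.
move=> hX; rewrite ger0_norm ?pba_ge0 // -pba_setT.
by apply: pba_le => //; exact: field_setT.
Qed.

Lemma pba_setI_eq1 E F : A E -> A F -> P E = 1 -> P F = P (F `&` E).
Proof.
move=> hE hF h1; rewrite (fin_additive_split HA pba_fin_additive hF hE).
have hD := field_setD HA hF hE.
have : P (F `\` E) <= P (~` E) by apply: pba_le; [|exact: field_setC|apply: subIsetr].
by rewrite pba_setC // h1 subrr => h; have := pba_ge0 hD; lra.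
Qed.

Lemma pba_neq0 X : P X != 0 -> X !=set0.
Proof.
move=> h; apply/set0P; apply: contra h => /eqP ->.
by rewrite (fin_additive_set0 HA pba_fin_additive).
Qed.

End ProbabilityCharge.

Section Restriction.
Context {R : realType} {Omega : Type} (A : set (set Omega)).
Hypothesis HA : is_field A.
Variable S : set Omega.
Local Notation val := (@proj1_sig Omega S).
Local Notation AS := (restr_fam S A).

Lemma restr_fam_field : is_field AS.
Proof.
split; first by exists setT; [exact: field_setT | rewrite preimage_setT].
split=> [G [F hF ->]|G H [F hF ->] [F' hF' ->]].
  by exists (~` F); [exact: field_setC | rewrite preimage_setC].
by exists (F `&` F'); [exact: field_setI | rewrite preimage_setI].
Qed.

Definition restr_rep (G : set {w | S w}) : set Omega :=
  epsilon (inhabits setT) (fun F => A F /\ G = val @^-1` F).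

Lemma restr_repP G : AS G -> A (restr_rep G) /\ G = val @^-1` restr_rep G.
Proof.
move=> [F hF ->].
by apply: (epsilon_spec _ (fun F' => A F' /\ val @^-1` F = val @^-1` F')); exists F.
Qed.

Lemma restr_sfE (mu : set Omega -> R) G : restr_sf A S mu G = mu (restr_rep G).
Proof. by []. Qed.

Lemma pushforward_additive (Q : set {w | S w} -> R) : fin_additive AS Q ->
  fin_additive A (fun F => Q (val @^-1` F)).
Proof.
move=> h F G hF hG hFG /=; rewrite preimage_setU h //; [by exists F | by exists G |].
by rewrite -preimage_setI hFG preimage_set0.
Qed.

Lemma pushforward_bounded (Q : set {w | S w} -> R) M :
  (forall G, AS G -> `|Q G| <= M) -> forall F, A F -> `|Q (val @^-1` F)| <= M.
Proof. by move=> h F hF; apply: h; exists F. Qed.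

Definition lpreimage (l : seq (R * set Omega)) := [seq (p.1, val @^-1` p.2) | p <- l].

Lemma sfun_lpreimage l x : sfun (lpreimage l) x = sfun l (val x).
Proof. by rewrite /sfun big_map; apply: eq_bigr => p _; rewrite /= !indicE. Qed.

Lemma approximates_lpreimage f l r :
  approximates A f l r -> approximates AS (f \o val) (lpreimage l) r.
Proof.
move=> [hl hr hs]; split=> // [_ /mapP [p /hl hp ->]|x]; first by exists p.2.
by rewrite sfun_lpreimage; apply: hs.
Qed.

Lemma inB_comp_val (f : Omega -> R) : inB A f -> inB AS (f \o val).
Proof.
move=> /inB_sfunP hf; apply/inB_sfunP => e /hf [l hl hs].
exists (lpreimage l) => [_ /mapP [p /hl hp ->]|x]; first by exists p.2.
by rewrite sfun_lpreimage; apply: hs.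
Qed.

Lemma integral_pushforward (nu : set {w | S w} -> R) (mu : set Omega -> R) M M'
    (f : Omega -> R) :
  fin_additive AS nu -> (forall G, AS G -> `|nu G| <= M') ->
  fin_additive A mu -> (forall X, A X -> `|mu X| <= M) ->
  (forall F, A F -> nu (val @^-1` F) = mu F) -> inB A f ->
  integral AS nu (f \o val) = integral A mu f.
Proof.
move=> hnu bnu hmu bmu nuE hf; rewrite -[RHS]mul1r.
apply: (integral_eq_scale HA restr_fam_field hmu bmu hnu bnu hf (inB_comp_val hf)).
move=> r hr; have [l hl] := approximates_exists hf hr.
exists l, (lpreimage l); split=> //; first exact: approximates_lpreimage.
case: hl => hl _ _; rewrite mul1r /sint big_map big_seq [RHS]big_seq /=.
by apply: eq_bigr => p /hl hp; rewrite nuE.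
Qed.

Variable E : set Omega.
Hypothesis ES : E `<=` S.
Hypothesis hE : A E.

Lemma preimage_val_setI F F' : val @^-1` F = val @^-1` F' -> F `&` E = F' `&` E.
Proof.
move=> h; apply/seteqP; split=> w [hw ew]; split=> //.
  by have : (val @^-1` F) (exist _ w (ES ew)) by []; rewrite h.
by have : (val @^-1` F') (exist _ w (ES ew)) by []; rewrite -h.
Qed.

Section Conditioning.
Variables (nu : set {w | S w} -> R) (mu : set Omega -> R) (a : R).
Hypothesis nuE : forall F, A F -> nu (val @^-1` F) = a * mu (F `&` E).

Lemma conditioning_additive : fin_additive A mu -> fin_additive AS nu.
Proof.
move=> hmu G1 G2 [F1 h1 ->] [F2 h2 ->] hd.
rewrite -preimage_setU !nuE ?setIUl ?hmu ?mulrDr //; last exact: field_setU.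
- exact: field_setI.
- exact: field_setI.
apply/seteqP; split=> // w [[? e1] [? _]].
by have : (val @^-1` F1 `&` val @^-1` F2) (exist _ w (ES e1)) by []; rewrite hd.
Qed.

Lemma conditioning_bounded M : (forall X, A X -> `|mu X| <= M) ->
  forall G, AS G -> `|nu G| <= `|a| * M.
Proof.
move=> hM G [F hF ->]; rewrite nuE // normrM; apply: ler_wpM2l => //.
by apply: hM; apply: field_setI.
Qed.

End Conditioning.

Definition extend0 (g : {w | S w} -> R) (w : Omega) : R :=
  if pselect (E w) is left h then g (exist _ w (ES h)) else 0.

Lemma extend0_in g w (h : E w) : extend0 g w = g (exist _ w (ES h)).
Proof. by rewrite /extend0; case: pselect => [h'|//]; congr g; apply: eq_exist. Qed.

Lemma extend0_out g w : ~ E w -> extend0 g w = 0.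
Proof. by rewrite /extend0; case: pselect. Qed.

Definition ltrace (l : seq (R * set {w | S w})) :=
  [seq (p.1, restr_rep p.2 `&` E) | p <- l].

Lemma simple_over_ltrace l : simple_over AS l -> simple_over A (ltrace l).
Proof.
move=> hl _ /mapP [p /hl hp ->] /=.
by apply: field_setI => //; case: (restr_repP hp).
Qed.

Lemma sfun_ltrace l w (h : E w) : simple_over AS l ->
  sfun (ltrace l) w = sfun l (exist _ w (ES h)).
Proof.
move=> hl; rewrite /sfun big_map big_seq [RHS]big_seq.
apply: eq_bigr => p /hl hp /=; rewrite !indicE; congr (_ * _%:R).
have [_ e] := restr_repP hp.
by rewrite [in RHS]e in_setI (mem_set h) andbT.
Qed.

Lemma sfun_ltrace_out l w : ~ E w -> sfun (ltrace l) w = 0.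
Proof.
by move=> h; rewrite /sfun big_map big1 // => p _ /=; rewrite indicE memNset ?mulr0 // => -[].
Qed.

Lemma approximates_extend0 g l r :
  approximates AS g l r -> approximates A (extend0 g) (ltrace l) r.
Proof.
move=> [hl hr hs]; split=> // [|w]; first exact: simple_over_ltrace.
case: (pselect (E w)) => h; first by rewrite extend0_in sfun_ltrace.
by rewrite extend0_out // sfun_ltrace_out // subrr normr0.
Qed.

Lemma inB_extend0 g : inB AS g -> inB A (extend0 g).
Proof.
move=> hg; apply/inB_sfunP => e he.
have [l /approximates_extend0 [hl _ hs]] := approximates_exists hg (divr_gt0 he (ltr0Sn R 1)).
by exists (ltrace l) => // w; apply: le_lt_trans (hs w) _; lra.
Qed.

Lemma integral_conditioning (nu : set {w | S w} -> R) (mu : set Omega -> R) a M g :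
  fin_additive A mu -> (forall X, A X -> `|mu X| <= M) ->
  (forall F, A F -> nu (val @^-1` F) = a * mu (F `&` E)) -> inB AS g ->
  integral AS nu g = a * integral A mu (extend0 g).
Proof.
move=> hmu bmu nuE hg.
apply: (integral_eq_scale HA restr_fam_field hmu bmu (conditioning_additive nuE hmu)
  (conditioning_bounded nuE bmu) (inB_extend0 hg) hg).
move=> r hr; have [l hl] := approximates_exists hg hr.
exists (ltrace l), l; split=> //; first exact: approximates_extend0.
case: hl => hl _ _; rewrite /sint big_map mulr_sumr big_seq [RHS]big_seq.
apply: eq_bigr => p /hl hp /=; have [hF e] := restr_repP hp.
by rewrite [in LHS]e nuE // mulrCA.
Qed.

Definition restr_cond (P : set Omega -> R) (G : set {w | S w}) : R :=
  P (restr_rep G `&` E) / P E.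

Section RestrCond.
Variable P : set Omega -> R.
Hypothesis P_bcharge : bcharge A P.

Lemma restr_condE F : A F -> restr_cond P (val @^-1` F) = (P E)^-1 * P (F `&` E).
Proof.
move=> hF; rewrite /restr_cond mulrC.
have [_ e] := restr_repP (ex_intro2 _ _ F hF erefl : AS (val @^-1` F)).
by rewrite -(preimage_val_setI e).
Qed.

Lemma restr_cond_bcharge : bcharge AS (restr_cond P).
Proof.
have [hPa [MP hPM]] := P_bcharge.
split; first exact: (conditioning_additive restr_condE hPa).
by exists (`|(P E)^-1| * MP); apply: (conditioning_bounded restr_condE hPM).
Qed.

Lemma integral_restr_cond g : inB AS g ->
  integral AS (restr_cond P) g = (P E)^-1 * integral A P (extend0 g).
Proof.
have [hPa [MP hPM]] := P_bcharge.
exact: (integral_conditioning hPa hPM restr_condE).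
Qed.

End RestrCond.

Lemma integral_extend0_null (mu : set Omega -> R) g :
  pba A mu -> mu E = 0 -> inB AS g -> integral A mu (extend0 g) = 0.
Proof.
move=> hmu muE hg; apply: (eq0_of_norm_le_mul (C := 2)) => // e he.
have [l hl] := approximates_exists hg he.
have := integral_approx HA (pba_fin_additive hmu) (pba_norm_le1 HA hmu) (inB_extend0 hg)
  (approximates_extend0 hl).
suff -> : sint mu (ltrace l) = 0 by rewrite sub0r normrN mulr1.
case: hl => hl _ _; rewrite /sint big_map big_seq big1 // => p /hl hp /=.
have hF : A (restr_rep p.2 `&` E) by apply: field_setI => //; case: (restr_repP hp).
suff -> : mu (restr_rep p.2 `&` E) = 0 by rewrite mulr0.
apply/eqP; rewrite eq_le (pba_ge0 hmu hF) andbT -muE.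
exact: (pba_le HA hmu hF hE (@subIsetr _ _ _)).
Qed.

End Restriction.

Lemma wstar_closure_near {R : realType} {Omega : Type} (A : set (set Omega))
    (C : set (set Omega -> R)) (P : set Omega -> R) n (f : 'I_n -> Omega -> R)
    (g : Omega -> R) e :
  wstar_closure A C P -> (forall k, inB A (f k)) -> inB A g -> 0 < e ->
  exists Q, [/\ C Q, forall k, `|integral A Q (f k) - integral A P (f k)| < e &
    `|integral A Q g - integral A P g| < e].
Proof.
move=> [_ hw] hf hg he.
pose F k := if unlift ord_max k is Some k' then f k' else g.
have [k|Q [hQ hc]] := hw n.+1 F _ e he; first by rewrite /F; case: unlift.
exists Q; split=> // [k|]; first by have := hc (lift ord_max k); rewrite /F liftK.
by have := hc ord_max; rewrite /F unlift_none.
Qed.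

Section TypeSpace.
Context {R : realType} {Omega N : Type} (A : set (set Omega)).
Variables (M : N -> set (set Omega)) (t : N -> Omega -> set Omega -> R).
Hypothesis hT : type_space A M t.

Lemma ts_field : is_field A. Proof. by case: hT => _ []. Qed.
Lemma ts_Mfield i : is_field (M i). Proof. by case: hT => _ [_ /(_ i) []]. Qed.
Lemma ts_MA i E : M i E -> A E. Proof. by case: hT => _ [_ /(_ i) [_ [+ _]]]; apply. Qed.
Lemma ts_pba i w : pba A (t i w). Proof. by case: hT => _ [_ /(_ i) [_ [_ []]]]. Qed.
Lemma ts_inB i E : A E -> inB (M i) (fun w => t i w E).
Proof. by case: hT => _ [_ /(_ i) [_ [_ [_ [+ _]]]]]; apply. Qed.
Lemma ts_knows i E w : M i E -> E w -> t i w E = 1.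
Proof. by case: hT => _ [_ /(_ i) [_ [_ [_ [_ +]]]]]; apply. Qed.

Lemma ts_knows_not i E w : M i E -> ~ E w -> t i w E = 0.
Proof.
move=> hE nE; have := ts_knows (field_setC (ts_Mfield i) hE) nE.
by rewrite (pba_setC ts_field (ts_pba i w) (ts_MA hE)) -[RHS]subr0 => /addrI /oppr_inj.
Qed.

Lemma type_additive i w : fin_additive A (t i w).
Proof. exact: pba_fin_additive (ts_pba i w). Qed.

Lemma type_norm_le1 i w X : A X -> `|t i w X| <= 1.
Proof. exact: (pba_norm_le1 ts_field (ts_pba i w)). Qed.

Lemma mixture_additive i n (lam : 'I_n -> R) (ws : 'I_n -> Omega) :
  fin_additive A (fun E => \sum_k lam k * t i (ws k) E).
Proof. by apply: fin_additive_sum => k; apply: type_additive. Qed.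

Lemma mixture_norm_le1 i n (lam : 'I_n -> R) (ws : 'I_n -> Omega) :
  (forall k, 0 <= lam k) -> \sum_k lam k = 1 ->
  forall X, A X -> `|\sum_k lam k * t i (ws k) X| <= 1.
Proof.
move=> h0 h1 X hX; have := norm_sum_le lam (fun k => type_norm_le1 i (ws k)) hX.
suff -> : \sum_k `|lam k| = 1 by rewrite mul1r.
by rewrite -h1; apply: eq_bigr => k _; rewrite ger0_norm.
Qed.

Lemma Pi_setT i P : Pi A t i P -> P setT = 1.
Proof.
move=> hP; have [[hadd [MP hMP]] _] := hP.
have hTA := field_setT ts_field; have hT1 := inB_indic (R := R) hTA.
apply/eqP; rewrite -subr_eq0; apply/eqP.
apply: (eq0_of_norm_le_mul (C := 1)) => // e he.
have [Q [[n [lam [ws [h0 [h1 ->]]]]] _ hc]] :=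
  wstar_closure_near (f := fun _ : 'I_0 => \1_setT) hP (fun k => hT1) hT1 he.
move: hc; rewrite (integral_indic ts_field hadd hMP hTA).
rewrite (integral_indic ts_field (mixture_additive i lam ws) (mixture_norm_le1 i ws h0 h1) hTA).
have -> : \sum_k lam k * t i (ws k) setT = 1.
  by rewrite -h1; apply: eq_bigr => k _; rewrite (pba_setT (ts_pba i (ws k))) mulr1.
by rewrite distrC mul1r => /ltW.
Qed.

End TypeSpace.

Section Cells.
Context {R : realType} {Omega N : Type} (A : set (set Omega)).
Variables (M : N -> set (set Omega)) (t : N -> Omega -> set Omega -> R).
Hypothesis hT : type_space A M t.
Variable i : N.

(* [t i v] gives full mass to the [M i]-set [cell] on which simple approximants
   of the [h k] keep their values at [v]; hence [X] meets [cell]. *)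
Lemma exists_near_in n (h : 'I_n -> Omega -> R) :
  (forall k, inB (M i) (h k)) -> forall v X, A X -> t i v X != 0 ->
  forall eta, 0 < eta -> exists2 w, X w & forall k, `|h k w - h k v| < eta.
Proof.
move=> hh v X hX hvX eta heta.
have heta2 : 0 < eta / 2 by apply: divr_gt0.
have approx k : exists l, simple_over (M i) l /\ forall w, `|h k w - sfun l w| < eta / 2.
  by have [l ? ?] := (inB_sfunP _ _).1 (hh k) _ heta2; exists l.
have [L hL] := choice _ approx.
pose cell := [set u | forall k, sfun (L k) u = sfun (L k) v].
have hcell : M i cell.
  apply: (field_bigcap (ts_Mfield hT i)) => k.
  exact: (field_sfun_preimage (fun x => x = sfun (L k) v) (ts_Mfield hT i) (hL k).1).
have vcell : t i v cell = 1 by apply: (ts_knows hT hcell).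
have [w [Xw cw]] : (X `&` cell) !=set0.
  apply: (pba_neq0 (ts_field hT) (ts_pba hT i v)).
  by rewrite -(pba_setI_eq1 (ts_field hT) (ts_pba hT i v) (ts_MA hT hcell)).
exists w => // k; have [_ hs] := hL k.
have := hs w; have := hs v; rewrite (cw k) !ltr_norml => /andP [? ?] /andP [? ?].
by apply/andP; split; lra.
Qed.

Lemma Pi_eq_of_types X Y P : A X -> A Y -> (forall w, t i w X = t i w Y) ->
  Pi A t i P -> P X = P Y.
Proof.
move=> hX hY hXY hP; have [[hadd [MP hMP]] _] := hP; have HA := ts_field hT.
apply/eqP; rewrite -subr_eq0; apply/eqP.
apply: (eq0_of_norm_le_mul (C := 2)) => // e he.
have [_ [[n [lam [ws [h0 [h1 ->]]]]] hc1 hc2]] :=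
  wstar_closure_near (f := fun _ : 'I_1 => \1_X) hP (fun k => inB_indic hX) (inB_indic hY) he.
move: {hc1}(hc1 ord0) hc2.
have hmix := mixture_additive hT i lam ws; have bmix := mixture_norm_le1 hT i ws h0 h1.
rewrite !(integral_indic HA hadd hMP) // !(integral_indic HA hmix bmix) //.
under eq_bigr do rewrite hXY.
move=> /ltW h1X /ltW h1Y; apply: le_trans (ler_distD _ _ _) _.
by rewrite distrC (_ : 2 * e = e + e); [exact: (lerD h1X h1Y) | ring].
Qed.

End Cells.

Lemma dist_ratio_lt {R : realType} (X Y D D' G eta eps : R) : 0 < D -> D / 2 <= D' ->
  `|Y - X| <= 2 * eta -> `|D' - D| <= eta -> `|X| <= G ->
  eta * (4 * D^-1 + 2 * G * (D^-1 * D^-1)) < eps -> `|Y / D' - X / D| < eps.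
Proof.
move=> hD hD' hYX hDD hX heps.
have hD'0 : 0 < D' by apply: lt_le_trans hD'; apply: divr_gt0.
set a := D^-1; set b := D'^-1.
have ha : 0 < a by rewrite invr_gt0.
have hb : 0 < b by rewrite invr_gt0.
have hba : b <= 2 * a.
  by rewrite (_ : 2 * a = (D / 2)^-1) ?lef_pV2 ?posrE ?divr_gt0 // /a invf_div mulrC.
have eta0 : 0 <= eta by apply: le_trans (normr_ge0 _) hDD.
have G0 : 0 <= G by apply: le_trans (normr_ge0 _) hX.
have -> : Y / D' - X / D = (Y - X) * b + X * ((D - D') * a * b).
  by rewrite /a /b; field; rewrite !lt0r_neq0.
apply: le_lt_trans (ler_normD _ _) (le_lt_trans _ heps); rewrite mulrDr.
apply: lerD; rewrite !normrM (gtr0_norm hb).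
  rewrite (_ : eta * (4 * a) = (2 * eta) * (2 * a)); last by ring.
  by apply: ler_pM => //; exact: ltW.
rewrite (gtr0_norm ha) distrC.
rewrite (_ : eta * _ = (G * eta * a) * (2 * a)); last by rewrite /a; ring.
rewrite (_ : `|X| * _ = (`|X| * `|D' - D| * a) * b); last by ring.
have a0 := ltW ha; have b0 := ltW hb.
apply: ler_pM; rewrite ?mulr_ge0 //.
by apply: ler_pM; rewrite ?mulr_ge0 //; apply: ler_pM.
Qed.

Lemma ratio_near {R : realType} (D G eps : R) : 0 < D -> 0 <= G -> 0 < eps ->
  exists2 eta, 0 < eta & forall D', `|D' - D| <= eta ->
    0 < D' /\ forall X Y, `|Y - X| <= 2 * eta -> `|X| <= G -> `|Y / D' - X / D| < eps.
Proof.
move=> hD G0 heps.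
pose K := 4 * D^-1 + 2 * G * (D^-1 * D^-1).
have K0 : 0 <= K by rewrite addr_ge0 ?mulr_ge0 ?invr_ge0 // ltW.
pose eta := Num.min (D / 2) (eps / (K + 1)).
have etaD : eta <= D / 2 by rewrite ge_min lexx.
have etaK : eta * K < eps.
  have : eta <= eps / (K + 1) by rewrite ge_min lexx orbT.
  by rewrite ler_pdivlMr; nra.
exists eta => [|D' hDD]; first by rewrite lt_min !divr_gt0 //; lra.
have hD' : D / 2 <= D' by move: hDD; rewrite ler_norml => /andP [? ?]; lra.
split=> [|X Y hYX hX]; last exact: (dist_ratio_lt hD hD' hYX hDD hX etaK).
by apply: lt_le_trans hD'; apply: divr_gt0.
Qed.

Section CommonCertainty.
Context {R : realType} {Omega N : Type} (A : set (set Omega)).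
Variables (M : N -> set (set Omega)) (t : N -> Omega -> set Omega -> R).
Hypothesis hT : type_space A M t.
Variables (I : set N) (S E : set Omega).
Hypothesis hE : A E.
Hypothesis ES : E `<=` S.
Hypothesis certain : forall w i, S w -> I i -> t i w E = 1.
Local Notation val := (@proj1_sig Omega S).
Local Notation tS := (induced_t A S I t).
Let HA := ts_field hT.

Lemma type_setI_certain i w F : S w -> I i -> A F -> t i w F = t i w (F `&` E).
Proof. by move=> hw hi hF; apply: (pba_setI_eq1 HA (ts_pba hT i w)) => //; apply: certain. Qed.

Lemma induced_preimage_setI (j : {i | I i}) (w : {w | S w}) F : A F ->
  tS j w (val @^-1` F) = t (sval j) (val w) (F `&` E).
Proof.
move=> hF; rewrite /induced_t restr_sfE.
have [hF' e] := restr_repP (ex_intro2 _ _ F hF erefl : restr_fam S A (val @^-1` F)).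
rewrite (type_setI_certain (proj2_sig w) (proj2_sig j) hF').
by rewrite -(preimage_val_setI ES e).
Qed.

Lemma induced_preimage (j : {i | I i}) (w : {w | S w}) F : A F ->
  tS j w (val @^-1` F) = t (sval j) (val w) F.
Proof.
by move=> hF; rewrite induced_preimage_setI // -type_setI_certain //; apply: proj2_sig.
Qed.

Lemma induced_additive j w : fin_additive (restr_fam S A) (tS j w).
Proof.
apply: (conditioning_additive HA ES hE (mu := t (sval j) (val w)) (a := 1)).
  by move=> F hF; rewrite mul1r induced_preimage_setI.
exact: (type_additive hT).
Qed.

Lemma induced_norm_le1 j w G : restr_fam S A G -> `|tS j w G| <= 1.
Proof.
move=> hG; rewrite -[1]mul1r -{1}normr1.
apply: (conditioning_bounded HA hE (mu := t (sval j) (val w))) => //.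
  by move=> F hF; rewrite mul1r induced_preimage_setI.
exact: (type_norm_le1 hT).
Qed.

Lemma Pi_pushforward (j : {i | I i}) Q : Pi (restr_fam S A) tS j Q ->
  Pi A t (sval j) (fun F => Q (val @^-1` F)).
Proof.
move=> [[hQa [MQ hQM]] hQ].
have hPa := pushforward_additive hQa; have hPM := pushforward_bounded hQM.
split=> [|n f hf e he]; first by split=> //; exists MQ.
have [_ [[n' [lam [ws [h0 [h1 ->]]]]] hc]] :=
  hQ n (fun k => f k \o val) (fun k => inB_comp_val S (hf k)) e he.
exists (fun F => \sum_k lam k * t (sval j) (val (ws k)) F).
split=> [|k]; first by exists n', lam, (fun k => val (ws k)).
have := hc k; rewrite (integral_pushforward HA hQa hQM hPa hPM (fun F _ => erefl) (hf k)).
have mixE F : A F -> \sum_k lam k * tS j (ws k) (val @^-1` F) =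
    \sum_k lam k * t (sval j) (val (ws k)) F.
  by move=> hF; apply: eq_bigr => k' _; rewrite induced_preimage.
by rewrite (integral_pushforward HA (fin_additive_sum lam (fun k => induced_additive j (ws k)))
  (norm_sum_le lam (fun k => induced_norm_le1 j (ws k)))
  (mixture_additive hT (sval j) lam (fun k => val (ws k)))
  (mixture_norm_le1 hT (sval j) (fun k => val (ws k)) h0 h1) mixE (hf k)).
Qed.


Section Player.
Variable i : N.
Hypothesis hi : I i.

Lemma type_certain_01 w : t i w E = 0 \/ t i w E = 1.
Proof.
have [h0|hn0] := eqVneq (t i w E) 0; [by left | right].
apply/eqP; rewrite -subr_eq0; apply/eqP.
apply: (eq0_of_norm_le_mul (C := 1)) => // e he.
have [w' Ew' /(_ ord0)] := exists_near_in hT (h := fun _ : 'I_1 => fun v => t i v E)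
  (fun _ => ts_inB hT i hE) hE hn0 he.
by rewrite /= (certain (ES Ew') hi) mul1r distrC => /ltW.
Qed.

Definition certainty_set := [set v | t i v E = 1].

Lemma certainty_set_M : M i certainty_set.
Proof.
have h2 : (0 : R) < 1 / 2 by lra.
have [l hl hs] := (inB_sfunP _ _).1 (ts_inB hT i hE) _ h2.
have -> : certainty_set = [set v | 1 / 2 < sfun l v].
  apply/seteqP; split=> v; rewrite /certainty_set /=;
    have := hs v; rewrite ltr_norml => /andP [? ?].
    by move=> h; lra.
  by case: (type_certain_01 v) => // h ?; exfalso; lra.
exact: (field_sfun_preimage (fun x => 1 / 2 < x) (ts_Mfield hT i) hl).
Qed.

Lemma type_certainty_set v : t i v E = t i v certainty_set.
Proof.
case: (type_certain_01 v) => h; last by rewrite h (ts_knows hT certainty_set_M).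
rewrite h (ts_knows_not hT certainty_set_M) // /certainty_set /= h.
by move=> /esym /eqP; rewrite oner_eq0.
Qed.

Lemma Pi_certain_ge (P : set Omega -> R) d : Pi A t i P ->
  (forall F, A F -> S `<=` F -> d <= P F) -> d <= P E.
Proof.
move=> hP hd; have hB := ts_MA hT certainty_set_M.
rewrite (Pi_eq_of_types hT hE hB type_certainty_set hP).
by apply: hd => // w hw; apply: certain.
Qed.

Definition type_integral (f : Omega -> R) v := integral A (t i v) f.

Lemma inB_type_integral f : inB A f -> inB (M i) (type_integral f).
Proof.
move=> hf; apply: inB_uniform_limit => e he.
have [l hl] := approximates_exists hf (divr_gt0 he (ltr0Sn R 1)); have [hsl _ _] := hl.
exists (fun v => sint (t i v) l).
  apply: (inB_sum (F := fun p v => p.1 * t i v p.2)) => p /hsl hp.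
  exact: (inB_scale p.1 (ts_inB hT i hp)).
move=> v; have := integral_approx HA (type_additive hT i v) (type_norm_le1 hT i v) hf hl.
by rewrite distrC mulr1 => /le_trans; apply; lra.
Qed.

End Player.

Lemma integral_induced (j : {i | I i}) (w : {w | S w}) g : inB (restr_fam S A) g ->
  integral (restr_fam S A) (tS j w) g = type_integral (sval j) (extend0 ES g) (val w).
Proof.
move=> hg; rewrite /type_integral -[RHS]mul1r.
apply: (integral_conditioning HA ES hE (type_additive hT _ _) (type_norm_le1 hT _ _) _ hg).
by move=> F hF; rewrite mul1r induced_preimage_setI.
Qed.

Lemma certain_mixture_near i (hi : I i) (w0 : {w | S w}) n' (lam : 'I_n' -> R)
    (ws : 'I_n' -> Omega) n (g : 'I_n -> {w | S w} -> R) eta :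
  (forall m, 0 <= lam m) -> \sum_m lam m = 1 ->
  (forall k, inB (restr_fam S A) (g k)) -> 0 < eta ->
  exists W : 'I_n' -> {w | S w}, forall k,
    `|\sum_m lam m * t i (ws m) E * type_integral i (extend0 ES (g k)) (val (W m)) -
      \sum_m lam m * type_integral i (extend0 ES (g k)) (ws m)| <= eta.
Proof.
move=> h0 h1 hg heta.
pose phi k := type_integral i (extend0 ES (g k)).
have hphi k : inB (M i) (phi k) := inB_type_integral i (inB_extend0 HA ES hE (hg k)).
have hW m : exists W : {w | S w},
    t i (ws m) E = 1 -> forall k, `|phi k (val W) - phi k (ws m)| < eta.
  have [hm|hm] := eqVneq (t i (ws m) E) 1; last by exists w0 => h; rewrite h eqxx in hm.
  have hm0 : t i (ws m) E != 0 by rewrite hm oner_eq0.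
  have [w Ew hw] := exists_near_in hT hphi hE hm0 heta.
  by exists (exist _ w (ES Ew)).
have [W hW'] := choice _ hW.
exists W => k; rewrite -sumrB; apply: le_trans (ler_norm_sum _ _ _) _.
rewrite -[eta]mul1r -h1 mulr_suml; apply: ler_sum => m _; rewrite -/(phi k).
have [hm|hm] := type_certain_01 hi (ws m).
  have -> : phi k (ws m) = 0.
    exact: (integral_extend0_null HA ES hE (ts_pba hT i (ws m)) hm (hg k)).
  by rewrite hm !mulr0 mul0r subrr normr0 mulr_ge0 // ltW.
rewrite hm mulr1 -mulrBr normrM ger0_norm //; apply: ler_wpM2l => //.
exact/ltW/hW'.
Qed.

Lemma integral_induced_sum (j : {i | I i}) n (mu : 'I_n -> R) (W : 'I_n -> {w | S w}) g :
  inB (restr_fam S A) g ->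
  integral (restr_fam S A) (fun G => \sum_m mu m * tS j (W m) G) g =
  \sum_m mu m * type_integral (sval j) (extend0 ES g) (val (W m)).
Proof.
move=> hg; rewrite (integral_sum (restr_fam_field HA S) mu
  (fun m => induced_additive j (W m)) (fun m => induced_norm_le1 j (W m)) hg).
by apply: eq_bigr => m _; rewrite integral_induced.
Qed.

Lemma restr_cond_Pi (P : set Omega -> R) j : bcharge A P ->
  (forall i, I i -> Pi A t i P) -> 0 < P E -> Pi (restr_fam S A) tS j (restr_cond A E P).
Proof.
move=> P_bcharge P_Pi PE_gt0; case: j => i hi; split=> [|n g hg eps heps].
  exact: (restr_cond_bcharge HA ES hE P_bcharge).
have [hPa [MP hPM]] := P_bcharge.
pose f k := extend0 ES (g k).
have hf k : inB A (f k) := inB_extend0 HA ES hE (hg k).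
pose G := \sum_k `|integral A P (f k)|.
have [eta heta near] := ratio_near PE_gt0 (sumr_ge0 _ (fun k _ => normr_ge0 _) : 0 <= G) heps.
have [_ [[n' [lam [ws [h0 [h1 ->]]]]] hc hcE]] :=
  wstar_closure_near (P_Pi i hi) hf (inB_indic hE) heta.
have hmix := mixture_additive hT i lam ws; have bmix := mixture_norm_le1 hT i ws h0 h1.
move: hcE; rewrite (integral_indic HA hPa hPM hE) (integral_indic HA hmix bmix hE).
set D' := \sum_k _ => /ltW /near [D'gt0 {}near].
have [e0 Ee0] : E !=set0.
  apply/set0P; apply: contra_neq (lt0r_neq0 PE_gt0) => ->.
  exact: (fin_additive_set0 HA hPa).
have [W hW] := certain_mixture_near hi (exist _ e0 (ES Ee0)) ws h0 h1 hg heta.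
pose mu m := lam m * t i (ws m) E / D'.
exists (fun G => \sum_m mu m * tS (exist _ i hi) (W m) G); split.
  exists n', mu, W; split=> [m|].
    by rewrite /mu !mulr_ge0 ?invr_ge0 ?(pba_ge0 (ts_pba hT i (ws m)) hE) // ltW.
  by rewrite /mu -mulr_suml -/D' mulfV // lt0r_neq0.
move=> k; rewrite integral_induced_sum // (integral_restr_cond HA ES hE P_bcharge (hg k)).
rewrite -/(f k) mulrC (_ : \sum_m _ = (\sum_m lam m * t i (ws m) E *
  type_integral i (f k) (val (W m))) / D'); last first.
  by rewrite mulr_suml; apply: eq_bigr => m _; rewrite /mu mulrAC.
apply: near; last by rewrite /G (bigD1 k) //= lerDl sumr_ge0.
have := hc k; rewrite (integral_sum HA lam (fun m => type_additive hT i (ws m))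
  (fun m => type_norm_le1 hT i (ws m)) (hf k)).
move: (hW k); rewrite -/(f k) /type_integral ler_norml ltr_norml => /andP [? ?] /andP [? ?].
by rewrite ler_norml; apply/andP; split; lra.
Qed.

End CommonCertainty.

Lemma finite_setT_sig {T : Type} (I : set T) :
  finite_set I -> finite_set [set: {i | I i}].
Proof.
move=> hI; have <- : sval @^-1` I = [set: {i | I i}].
  by apply/seteqP; split=> // -[x hx].
by apply: finite_preimage hI => -[x hx] [y hy] _ _ /= e; apply: eq_exist.
Qed.

Lemma point_mass_bcharge {R : realType} {Omega : Type} (A : set (set Omega)) w :
  bcharge A (fun F => \1_F w : R).
Proof.
split=> [E G _ _ hEG|].
  rewrite !indicE in_setU.
  have [wE|wE] := boolP (w \in E); have [wG|wG] := boolP (w \in G); rewrite /= ?addr0 ?add0r //.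
  have : (E `&` G) w by split; apply: set_mem.
  by rewrite hEG.
by exists 1 => E _; rewrite indicE; case: (_ \in _); rewrite ?normr1 ?normr0.
Qed.

Lemma univ_consistent_of_induced {R : realType} {Omega N : Type} (A : set (set Omega))
    (M : N -> set (set Omega)) (t : N -> Omega -> set Omega -> R) :
  type_space A M t ->
  (forall I, finite_set I -> forall S, cc_component A t I S ->
    consistent (restr_fam S A) (induced_t A S I t)) ->
  univ_consistent A t.
Proof.
move=> hT hind I hI S hS; have [[s0 hs0] [E [hE [ES certain]]]] := hS.
have [[i0 hi0]|noI] := pselect (exists i, I i); last first.
  exists (fun F => \1_F s0); split; first exact: point_mass_bcharge.
  split=> [i hi|]; first by case: noI; exists i.
  by exists 1 => // F _ SF; rewrite indicE mem_set //; apply: SF.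
have [Q [_ hQ]] := hind I hI S hS [set: {i | I i}] (finite_setT_sig hI).
pose P F := Q (sval @^-1` F).
have hPi i (hi : I i) : Pi A t i P.
  exact: (Pi_pushforward hT hE ES certain (hQ (exist _ i hi) Logic.I)).
exists P; split; first by case: (hPi i0 hi0).
split=> //; exists 1 => // F hF SF.
have -> : P F = P setT.
  by rewrite /P; congr Q; apply/seteqP; split=> // -[x hx] _; apply: SF.
by rewrite (Pi_setT hT (hPi i0 hi0)).
Qed.

Lemma induced_consistent_of_univ {R : realType} {Omega N : Type} (A : set (set Omega))
    (M : N -> set (set Omega)) (t : N -> Omega -> set Omega -> R) :
  type_space A M t -> univ_consistent A t ->
  forall I, finite_set I -> forall S, cc_component A t I S ->
    consistent (restr_fam S A) (induced_t A S I t).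
Proof.
move=> hT hU I hI S hS J _; have [_ [E [hE [ES certain]]]] := hS.
have [[i0 hi0]|noI] := pselect (exists i, I i); last first.
  exists (fun _ => 0); split=> [|[i hi]]; last by case: noI; exists i.
  by split=> [? ? _ _ _|]; [rewrite addr0 | exists 0 => ? _; rewrite normr0].
have [P [hPb [hPi [d hd hdS]]]] := hU I hI S hS.
have PE_gt0 : 0 < P E.
  exact: lt_le_trans hd (Pi_certain_ge hT hE ES certain hi0 (hPi i0 hi0) hdS).
exists (restr_cond A E P); split; first exact: (restr_cond_bcharge (ts_field hT) ES hE hPb).
by move=> j _; apply: (restr_cond_Pi hT hE ES certain).
Qed.

Theorem proposition4 (R : realType) (Omega N : Type) (A : set (set Omega))
  (M : N -> set (set Omega)) (t : N -> Omega -> set Omega -> R) :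
  type_space A M t ->
  (univ_consistent A t <->
   (forall I : set N, finite_set I -> forall S : set Omega, cc_component A t I S ->
      consistent (restr_fam S A) (induced_t A S I t))).
Proof.
move=> hT; split; first exact: (induced_consistent_of_univ hT).
exact: (univ_consistent_of_induced hT).
Qed.
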